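(* Let $\sim$ be an analytic equivalence relation on the Cantor set $\{0,1\}^{\mathbb{N}}$ (i.e. $\sim$ is an analytic subset of $\{0,1\}^{\mathbb{N}}\times\{0,1\}^{\mathbb{N}}$) with the property that whenever $\alpha,\beta\in\{0,1\}^{\mathbb{N}}$ differ at exactly one coordinate, $\alpha\not\sim\beta$. Then $\sim$ is a meager subset of $\{0,1\}^{\mathbb{N}}\times\{0,1\}^{\mathbb{N}}$, and $\sim$ has uncountably many equivalence classes.
   Context: The Cantor set $\{0,1\}^{\mathbb{N}}$ carries the product topology with $\{0,1\}$ discrete. A space is Polish if it is separable and completely metrizable. If $Y$ is Polish, a set $A\subseteq Y$ is analytic if there is a Polish space $Z$ and a closed set $D\subseteq Y\times Z$ such that $A$ is the projection of $D$ to $Y$. A set is meager if it is a countable union of nowhere dense sets. *)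

From Stdlib Require Import Reals.
Open Scope R_scope.

Definition Cantor : Type := nat -> bool.

Definition Cantor2 : Type := (Cantor * Cantor)%type.

(** Basic open neighbourhoods in the product topology: agree on the first n coordinates. *)
Definition agree (n : nat) (a b : Cantor) : Prop :=
  forall i, (i < n)%nat -> a i = b i.

Definition cyl2 (p : Cantor2) (n : nat) (q : Cantor2) : Prop :=
  agree n (fst p) (fst q) /\ agree n (snd p) (snd q).

Definition closure2 (A : Cantor2 -> Prop) (p : Cantor2) : Prop :=
  forall n, exists q, cyl2 p n q /\ A q.

Definition interior2 (A : Cantor2 -> Prop) (p : Cantor2) : Prop :=
  exists n, forall q, cyl2 p n q -> A q.

Definition nowhere_dense2 (A : Cantor2 -> Prop) : Prop :=
  forall p, ~ interior2 (closure2 A) p.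

Definition meager2 (A : Cantor2 -> Prop) : Prop :=
  exists N : nat -> Cantor2 -> Prop,
    (forall k, nowhere_dense2 (N k)) /\
    (forall p, A p <-> exists k, N k p).

(** Complete separable metric spaces (every Polish space is homeomorphic to one). *)
Definition is_metric {Z : Type} (d : Z -> Z -> R) : Prop :=
  (forall x y, 0 <= d x y) /\
  (forall x y, d x y = 0 <-> x = y) /\
  (forall x y, d x y = d y x) /\
  (forall x y z, d x z <= d x y + d y z).

Definition complete_metric {Z : Type} (d : Z -> Z -> R) : Prop :=
  forall u : nat -> Z,
    (forall eps, eps > 0 -> exists N, forall m n, (m >= N)%nat -> (n >= N)%nat ->
        d (u m) (u n) < eps) ->
    exists l, forall eps, eps > 0 -> exists N, forall n, (n >= N)%nat -> d (u n) l < eps.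

Definition separable_metric {Z : Type} (d : Z -> Z -> R) : Prop :=
  exists s : nat -> Z, forall z eps, eps > 0 -> exists n, d z (s n) < eps.

Definition polish_metric {Z : Type} (d : Z -> Z -> R) : Prop :=
  is_metric d /\ complete_metric d /\ separable_metric d.

Definition closed_in_prod {Z : Type} (d : Z -> Z -> R) (D : Cantor2 -> Z -> Prop) : Prop :=
  forall p z, ~ D p z ->
    exists n eps, eps > 0 /\
      forall q w, cyl2 p n q -> d z w < eps -> ~ D q w.

Definition analytic2 (A : Cantor2 -> Prop) : Prop :=
  exists (Z : Type) (d : Z -> Z -> R),
    polish_metric d /\
    exists D : Cantor2 -> Z -> Prop,
      closed_in_prod d D /\ (forall p, A p <-> exists z, D p z).

Definition equivalence_rel (E : Cantor -> Cantor -> Prop) : Prop :=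
  (forall a, E a a) /\ (forall a b, E a b -> E b a) /\
  (forall a b c, E a b -> E b c -> E a c).

Definition differ_at_one (a b : Cantor) : Prop :=
  exists i, a i <> b i /\ forall j, j <> i -> a j = b j.

Definition graph2 (E : Cantor -> Cantor -> Prop) (p : Cantor2) : Prop :=
  E (fst p) (snd p).

Definition countably_many_classes (E : Cantor -> Cantor -> Prop) : Prop :=
  exists f : nat -> Cantor, forall a, exists n, E a (f n).

From Stdlib Require Import Reals Lra Lia List Classical ClassicalEpsilon FunctionalExtensionality.
From Stdlib Require Cantor.
Import ListNotations.

(* A set A with the Baire property that is not meager is comeager in some basic open set
   U of level n. If the flip of coordinate n (which maps U onto itself) sends A into its
   complement, then U is the union of two meager sets, contradicting the Baire category
   theorem. Analytic sets have the Baire property: the set of points where A is locally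
   non-meager is closed and covers A up to a meager set, and the Suslin scheme of A shows
   that it exceeds A only by a meager set. The graph of an equivalence relation separating
   neighbours is disjoint from its image under any flip of the second coordinate, and each
   class (times the Cantor set) from its image under flips of the first one; so the graph
   and every class are meager, and countably many classes cannot cover the Cantor set. *)

Lemma agree_refl n a : agree n a a.
Proof. intros i _; reflexivity. Qed.

Lemma agree_sym n a b : agree n a b -> agree n b a.
Proof. intros H i Hi; symmetry; auto. Qed.

Lemma agree_trans n a b c : agree n a b -> agree n b c -> agree n a c.
Proof. intros H1 H2 i Hi; rewrite H1; auto. Qed.

Lemma agree_le m n a b : (m <= n)%nat -> agree n a b -> agree m a b.
Proof. intros Hmn H i Hi; apply H; lia. Qed.

Lemma cyl2_refl p n : cyl2 p n p.
Proof. split; apply agree_refl. Qed.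

Lemma cyl2_sym p n q : cyl2 p n q -> cyl2 q n p.
Proof. intros [H1 H2]; split; apply agree_sym; auto. Qed.

Lemma cyl2_trans p n q r : cyl2 p n q -> cyl2 q n r -> cyl2 p n r.
Proof. intros [H1 H2] [H3 H4]; split; eapply agree_trans; eauto. Qed.

Lemma cyl2_le m n p q : (m <= n)%nat -> cyl2 p n q -> cyl2 p m q.
Proof. intros Hmn [H1 H2]; split; eapply agree_le; eauto. Qed.

Lemma agree_nested_limit (a : nat -> Cantor) (m : nat -> nat) :
  (forall k, (k <= m k)%nat) -> (forall k, (m k <= m (S k))%nat) ->
  (forall k, agree (m k) (a k) (a (S k))) ->
  exists b, forall k, agree (m k) (a k) b.
Proof.
  intros Hk Hm Ha.
  assert (Hnest : forall k K, (k <= K)%nat -> (m k <= m K)%nat /\ agree (m k) (a k) (a K)).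
  { intros k K HkK; induction HkK as [|K _ [HmK HaK]].
    - split; [lia | apply agree_refl].
    - split; [specialize (Hm K); lia|].
      apply agree_trans with (a K); [exact HaK | apply agree_le with (m K); auto]. }
  exists (fun i => a (S i) i). intros k i Hi.
  destruct (Hnest k (Nat.max k (S i)) ltac:(lia)) as [_ H1].
  destruct (Hnest (S i) (Nat.max k (S i)) ltac:(lia)) as [_ H2].
  rewrite (H1 i Hi). symmetry. apply H2. specialize (Hk (S i)); lia.
Qed.

Lemma cyl2_nested_limit (q : nat -> Cantor2) (m : nat -> nat) :
  (forall k, (k <= m k)%nat) -> (forall k, (m k <= m (S k))%nat) ->
  (forall k, cyl2 (q k) (m k) (q (S k))) ->
  exists r, forall k, cyl2 (q k) (m k) r.
Proof.
  intros Hk Hm Hq.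
  destruct (agree_nested_limit (fun k => fst (q k)) m Hk Hm (fun k => proj1 (Hq k))) as [a Ha].
  destruct (agree_nested_limit (fun k => snd (q k)) m Hk Hm (fun k => proj2 (Hq k))) as [b Hb].
  exists (a, b); split; auto.
Qed.

Definition sparse (A : Cantor2 -> Prop) : Prop :=
  forall p n, exists q m, (n <= m)%nat /\ cyl2 p n q /\ forall r, cyl2 q m r -> ~ A r.

Definition meager (A : Cantor2 -> Prop) : Prop :=
  exists N : nat -> Cantor2 -> Prop,
    (forall k, sparse (N k)) /\ (forall p, A p -> exists k, N k p).

Lemma meager_sub A B : meager B -> (forall p, A p -> B p) -> meager A.
Proof. intros (N & HN & Hcov) HAB; exists N; split; auto. Qed.

Lemma sparse_meager A : sparse A -> meager A.
Proof. intros HA; exists (fun _ => A); split; auto. intros p Hp; exists 0%nat; exact Hp. Qed.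

Lemma meager0 : meager (fun _ => False).
Proof. apply sparse_meager. intros p n; exists p, n; split; [lia | split; [apply cyl2_refl | tauto]]. Qed.

Lemma meager_union (M : nat -> Cantor2 -> Prop) :
  (forall k, meager (M k)) -> meager (fun p => exists k, M k p).
Proof.
  intros HM.
  destruct (choice (fun k N => (forall j, sparse (N j)) /\ (forall p, M k p -> exists j, N j p)) HM)
    as [N HN].
  exists (fun n => N (fst (Cantor.of_nat n)) (snd (Cantor.of_nat n))). split.
  - intros n; apply HN.
  - intros p [k Hk]. destruct (proj2 (HN k) p Hk) as [j Hj].
    exists (Cantor.to_nat (k, j)). rewrite Cantor.cancel_of_to; exact Hj.
Qed.

Lemma meager_union2 A B : meager A -> meager B -> meager (fun p => A p \/ B p).
Proof.
  intros HA HB.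
  eapply meager_sub; [apply (meager_union (fun k => match k with 0%nat => A | _ => B end))|].
  - intros [|k]; auto.
  - intros p [Hp|Hp]; [exists 0%nat | exists 1%nat]; exact Hp.
Qed.

Lemma meager_union_list (M : list nat -> Cantor2 -> Prop) :
  (forall s, meager (M s)) -> meager (fun p => exists s, M s p).
Proof.
  intros HM.
  assert (Hlen : forall n (M : list nat -> Cantor2 -> Prop), (forall s, meager (M s)) ->
            meager (fun p => exists s, length s = n /\ M s p)).
  { induction n as [|n IH]; intros M' HM'.
    - eapply meager_sub; [apply (HM' [])|].
      intros p [[|j s] [Hs Hp]]; [exact Hp | discriminate].
    - eapply meager_sub.
      { apply (meager_union (fun j p => exists s, length s = n /\ M' (j :: s) p)).
        intros j; apply IH; auto. }
      intros p [[|j s] [Hs Hp]]; [discriminate|]. exists j, s; split; auto. }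
  eapply meager_sub.
  { apply (meager_union (fun n p => exists s, length s = n /\ M s p)); intros n; apply Hlen; auto. }
  intros p [s Hs]; exists (length s), s; auto.
Qed.

Theorem baire_category (N : nat -> Cantor2 -> Prop) p n :
  (forall k, sparse (N k)) -> exists r, cyl2 p n r /\ forall k, ~ N k r.
Proof.
  intros HN.
  assert (Hstep : forall kq : nat * (Cantor2 * nat), exists qm : Cantor2 * nat,
            (S (snd (snd kq)) <= snd qm)%nat /\ cyl2 (fst (snd kq)) (snd (snd kq)) (fst qm) /\
            forall r, cyl2 (fst qm) (snd qm) r -> ~ N (fst kq) r).
  { intros [k [q m]]. destruct (HN k q (S m)) as (q' & m' & Hm' & Hq' & Hr).
    exists (q', m'); simpl; split; [exact Hm'|split; [|exact Hr]].
    apply cyl2_le with (S m); [lia | exact Hq']. }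
  destruct (choice _ Hstep) as [step Hs].
  pose (qm := fix qm k := match k with 0%nat => (p, n) | S k => step (k, qm k) end).
  assert (Hqm : forall k, (S (snd (qm k)) <= snd (qm (S k)))%nat /\
            cyl2 (fst (qm k)) (snd (qm k)) (fst (qm (S k))) /\
            forall r, cyl2 (fst (qm (S k))) (snd (qm (S k))) r -> ~ N k r)
    by (intros k; apply (Hs (k, qm k))).
  assert (Hlevel : forall k, (k <= snd (qm k))%nat).
  { induction k as [|k IH]; [lia|]. pose proof (proj1 (Hqm k)); lia. }
  destruct (cyl2_nested_limit (fun k => fst (qm k)) (fun k => snd (qm k)) Hlevel
              (fun k => Nat.lt_le_incl _ _ (proj1 (Hqm k))) (fun k => proj1 (proj2 (Hqm k))))
    as [r Hr].
  exists r; split; [exact (Hr 0%nat)|]. intros k; apply (proj2 (proj2 (Hqm k))), Hr.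
Qed.

Corollary cyl2_not_meager p n : ~ meager (cyl2 p n).
Proof.
  intros (N & HN & Hcov). destruct (baire_category N p n HN) as (r & Hr & Hnot).
  destruct (Hcov r Hr) as [k Hk]; exact (Hnot k Hk).
Qed.

Lemma sparse_nowhere_dense2 A : sparse A -> nowhere_dense2 A.
Proof.
  intros HA p [n Hn]. destruct (HA p n) as (q & m & _ & Hq & Hr).
  destruct (Hn q Hq m) as (r & Hqr & Ar). exact (Hr r Hqr Ar).
Qed.

Lemma meager_meager2 A : meager A -> meager2 A.
Proof.
  intros (N & HN & Hcov). exists (fun k p => N k p /\ A p); split.
  - intros k; apply sparse_nowhere_dense2. intros p n.
    destruct (HN k p n) as (q & m & Hnm & Hq & Hr).
    exists q, m; split; [exact Hnm | split; [exact Hq|]].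
    intros r Hqr [Nr _]; exact (Hr r Hqr Nr).
  - intros p; split.
    + intros Ap; destruct (Hcov p Ap) as [k Hk]; exists k; auto.
    + intros [k [_ Ap]]; exact Ap.
Qed.

Definition open2 (O : Cantor2 -> Prop) : Prop :=
  forall p, O p -> exists n, forall q, cyl2 p n q -> O q.

Definition closed2 (F : Cantor2 -> Prop) : Prop := open2 (fun p => ~ F p).

Lemma closed2_compl O : open2 O -> closed2 (fun p => ~ O p).
Proof.
  intros HO p Hp. apply NNPP in Hp. destruct (HO p Hp) as [n Hn].
  exists n; intros q Hq Hnq; exact (Hnq (Hn q Hq)).
Qed.

Lemma interior2_sub A p : interior2 A p -> A p.
Proof. intros [n Hn]; apply Hn, cyl2_refl. Qed.

Lemma open2_interior2 A : open2 (interior2 A).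
Proof.
  intros p [n Hn]; exists n; intros q Hq; exists n; intros r Hr; apply Hn; eapply cyl2_trans; eauto.
Qed.

Lemma sparse_closed2_boundary F : closed2 F -> sparse (fun p => F p /\ ~ interior2 F p).
Proof.
  intros HF p n. destruct (classic (forall q, cyl2 p n q -> F q)) as [Hall|Hnot].
  - exists p, n; split; [lia | split; [apply cyl2_refl|]].
    intros r Hr [_ Hint]. apply Hint. exists n. intros q Hq. apply Hall. eapply cyl2_trans; eauto.
  - apply not_all_ex_not in Hnot as [q Hq]. apply imply_to_and in Hq as [Hpq Fq].
    destruct (HF q Fq) as [m Hm]. exists q, (Nat.max n m); split; [lia | split; [exact Hpq|]].
    intros r Hr [Fr _]. apply (Hm r); auto. apply cyl2_le with (Nat.max n m); auto; lia.
Qed.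

Definition baire_property (A : Cantor2 -> Prop) : Prop :=
  exists O, open2 O /\ meager (fun p => ~ (A p <-> O p)).

Lemma baire_property_ext A B :
  (forall p, A p <-> B p) -> baire_property A -> baire_property B.
Proof.
  intros HAB [O [HO HAO]]. exists O; split; auto.
  eapply meager_sub; [exact HAO|]. intros p; cbv beta; rewrite (HAB p); auto.
Qed.

Lemma baire_property_open O : open2 O -> baire_property O.
Proof.
  intros HO; exists O; split; auto.
  eapply meager_sub; [apply meager0|]. intros p Hp; apply Hp; reflexivity.
Qed.

Lemma baire_property_compl A : baire_property A -> baire_property (fun p => ~ A p).
Proof.
  intros [O [HO HAO]]. exists (interior2 (fun p => ~ O p)). split; [apply open2_interior2|].
  eapply meager_sub.
  { apply meager_union2; [exact HAO|].
    apply sparse_meager, (sparse_closed2_boundary (fun p => ~ O p)), closed2_compl, HO. }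
  intros p Hiff. pose proof (interior2_sub (fun q => ~ O q) p). cbv beta in *.
  destruct (classic (A p)), (classic (O p)),
    (classic (interior2 (fun q => ~ O q) p)); tauto.
Qed.

Lemma baire_property_union (A : nat -> Cantor2 -> Prop) :
  (forall k, baire_property (A k)) -> baire_property (fun p => exists k, A k p).
Proof.
  intros HA.
  destruct (choice (fun k O => open2 O /\ meager (fun p => ~ (A k p <-> O p))) HA) as [O HO].
  exists (fun p => exists k, O k p). split.
  - intros p [k Ok]. destruct (proj1 (HO k) p Ok) as [n Hn].
    exists n; intros q Hq; exists k; auto.
  - eapply meager_sub; [apply (meager_union (fun k p => ~ (A k p <-> O k p))); apply HO|].
    intros p Hiff. apply NNPP; intro Hnone. pose proof (not_ex_not_all _ _ Hnone) as Hall.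
    apply Hiff; split; intros [k Hk]; exists k; apply (Hall k); exact Hk.
Qed.

Lemma baire_property_inter (A : nat -> Cantor2 -> Prop) :
  (forall k, baire_property (A k)) -> baire_property (fun p => forall k, A k p).
Proof.
  intros HA. apply baire_property_ext with (fun p => ~ exists k, ~ A k p).
  - intros p; split; [apply not_ex_not_all | intros H [k Hk]; exact (Hk (H k))].
  - apply baire_property_compl, baire_property_union; intros k; apply baire_property_compl, HA.
Qed.

Lemma baire_property_closed F : closed2 F -> baire_property F.
Proof.
  intros HF. apply baire_property_ext with (fun p => ~ ~ F p).
  - intros p; split; [apply NNPP | tauto].
  - apply baire_property_compl, baire_property_open, HF.
Qed.

Lemma baire_property_closed_diff F (G : nat -> Cantor2 -> Prop) :
  closed2 F -> (forall j, closed2 (G j)) -> baire_property (fun p => F p /\ forall j, ~ G j p).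
Proof.
  intros HF HG.
  apply baire_property_ext with (fun p => forall k, match k with 0%nat => F p | S j => ~ G j p end).
  - intros p; split.
    + intros H; split; [exact (H 0%nat) | intros j; exact (H (S j))].
    + intros [Fp Gp] [|j]; auto.
  - apply (baire_property_inter (fun k p => match k with 0%nat => F p | S j => ~ G j p end)).
    intros [|j]; [apply baire_property_closed, HF | apply baire_property_open, HG].
Qed.

Lemma baire_property_comeager_cyl2 A :
  baire_property A -> ~ meager A -> exists p n, meager (fun q => cyl2 p n q /\ ~ A q).
Proof.
  intros [O [HO HAO]] HA.
  destruct (classic (exists p, O p)) as [[p Op]|HnoO].
  - destruct (HO p Op) as [n Hn]. exists p, n.
    eapply meager_sub; [exact HAO|]. intros q [Hq Aq] Hiff. exact (Aq (proj2 Hiff (Hn q Hq))).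
  - exfalso. apply HA. eapply meager_sub; [exact HAO|].
    intros p Ap Hiff; apply HnoO; exists p; exact (proj1 Hiff Ap).
Qed.

Definition nonmeager_at (A : Cantor2 -> Prop) (p : Cantor2) : Prop :=
  forall n, ~ meager (fun q => cyl2 p n q /\ A q).

Lemma nonmeager_at_ext A B :
  (forall p, A p <-> B p) -> forall p, nonmeager_at A p -> nonmeager_at B p.
Proof.
  intros HAB p Hp n Hm. apply (Hp n). eapply meager_sub; [exact Hm|].
  intros q [Hq Aq]; split; [exact Hq | apply HAB, Aq].
Qed.

Lemma nonmeager_at_closure2 A p : nonmeager_at A p -> closure2 A p.
Proof.
  intros Hp n. apply NNPP; intro Hno. apply (Hp n).
  eapply meager_sub; [apply meager0|]. intros q Hq; apply Hno; exists q; exact Hq.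
Qed.

Lemma closed2_nonmeager_at A : closed2 (nonmeager_at A).
Proof.
  intros p Hp. apply not_all_ex_not in Hp as [n Hn]. apply NNPP in Hn.
  exists n. intros q Hq Hnq. apply (Hnq n). eapply meager_sub; [exact Hn|].
  intros r [Hr Ar]; split; auto. eapply cyl2_trans; eauto.
Qed.

Definition bits (m : nat) : Cantor := Nat.testbit m.

Lemma agree_bits n a : exists m, agree n a (bits m).
Proof.
  revert a; induction n as [|n IH]; intros a.
  - exists 0%nat; intros i Hi; lia.
  - destruct (IH (fun i => a (S i))) as [m Hm].
    exists (2 * m + Nat.b2n (a 0%nat))%nat. intros [|i] Hi; unfold bits.
    + rewrite Nat.testbit_0_r; reflexivity.
    + rewrite Nat.testbit_succ_r. apply Hm; lia.
Qed.

Lemma cyl2_bits p n : exists m1 m2, cyl2 p n (bits m1, bits m2).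
Proof.
  destruct (agree_bits n (fst p)) as [m1 H1], (agree_bits n (snd p)) as [m2 H2].
  exists m1, m2; split; assumption.
Qed.

Lemma meager_diff_nonmeager_at A : meager (fun p => A p /\ ~ nonmeager_at A p).
Proof.
  pose (M m1 m2 n q := meager (fun r => cyl2 (bits m1, bits m2) n r /\ A r) /\
                       cyl2 (bits m1, bits m2) n q /\ A q).
  assert (HM : forall m1 m2 n, meager (M m1 m2 n)).
  { intros m1 m2 n.
    destruct (classic (meager (fun r => cyl2 (bits m1, bits m2) n r /\ A r))) as [H|H].
    - eapply meager_sub; [exact H|]. intros q [_ Hq]; exact Hq.
    - eapply meager_sub; [apply meager0|]. intros q [Hq _]; exact (H Hq). }
  eapply meager_sub.
  { apply (meager_union (fun m1 p => exists m2 n, M m1 m2 n p)); intros m1.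
    apply (meager_union (fun m2 p => exists n, M m1 m2 n p)); intros m2.
    apply meager_union; intros n; apply HM. }
  intros p [Ap Hp]. apply not_all_ex_not in Hp as [n Hn]. apply NNPP in Hn.
  destruct (cyl2_bits p n) as (m1 & m2 & Hpm).
  exists m1, m2, n. split; [| split; [apply cyl2_sym; exact Hpm | exact Ap]].
  eapply meager_sub; [exact Hn|]. intros q [Hq Aq]; split; [eapply cyl2_trans; eauto | exact Aq].
Qed.

(* The Baire category theorem enters through a point of P inside a basic open set where
   P is comeager. *)
Lemma meager_of_nonmeager_at A P :
  baire_property P -> (forall p, P p -> nonmeager_at A p) ->
  meager (fun p => P p /\ A p) -> meager P.
Proof.
  intros [O [HO HPO]] HPA HmPA.
  destruct (classic (exists p, O p)) as [[p Op]|HnoO].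
  - exfalso. destruct (HO p Op) as [n Hn].
    assert (HP : exists p', cyl2 p n p' /\ P p').
    { apply NNPP; intro Hno. apply (cyl2_not_meager p n).
      eapply meager_sub; [exact HPO|]. intros q Hq Hiff.
      apply Hno; exists q; split; [exact Hq | exact (proj2 Hiff (Hn q Hq))]. }
    destruct HP as [p' [Hp' Pp']].
    apply (HPA p' Pp' n). eapply meager_sub; [apply (meager_union2 _ _ HmPA HPO)|].
    intros q [Hq Aq]. assert (Oq : O q) by (apply Hn; eapply cyl2_trans; eauto).
    destruct (classic (P q)); [left; auto | right; tauto].
  - eapply meager_sub; [exact HPO|].
    intros p Pp Hiff. apply HnoO; exists p; exact (proj1 Hiff Pp).
Qed.

Fixpoint branch (g : list nat -> nat) (n : nat) : list nat :=
  match n with 0%nat => [] | S n => branch g n ++ [g (branch g n)] end.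

Lemma branch_map g n : branch g n = map (fun k => g (branch g k)) (seq 0 n).
Proof. induction n as [|n IH]; [reflexivity|]. rewrite seq_S, map_app, <- IH. reflexivity. Qed.

Lemma nth_map_seq (x : nat -> nat) n k : (k < n)%nat -> nth k (map x (seq 0 n)) 0%nat = x k.
Proof.
  intros Hk. rewrite (nth_indep _ _ (x 0%nat)) by (rewrite length_map, length_seq; exact Hk).
  rewrite map_nth, seq_nth by exact Hk. reflexivity.
Qed.

Section AnalyticEnvelope.

Variables (Z : Type) (d : Z -> Z -> R) (c : nat -> Z) (D : Cantor2 -> Z -> Prop).
Hypothesis d_metric : is_metric d.
Hypothesis d_complete : complete_metric d.
Hypothesis c_dense : forall z eps, eps > 0 -> exists n, d z (c n) < eps.
Hypothesis D_closed : closed_in_prod d D.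

(* The Suslin scheme of the projection of D: [piece s] collects the points having a
   witness within 1/(k+1) of [c (nth k s)] for every k. *)
Definition piece (s : list nat) (p : Cantor2) : Prop :=
  exists z, D p z /\ forall k, (k < length s)%nat -> d z (c (nth k s 0%nat)) < / INR (S k).

Lemma piece_nil p : piece [] p <-> exists z, D p z.
Proof.
  split; [intros [z [Dz _]]; exists z; exact Dz|].
  intros [z Dz]; exists z; split; [exact Dz|]. intros k Hk; simpl in Hk; lia.
Qed.

Lemma piece_snoc s p : piece s p -> exists j, piece (s ++ [j]) p.
Proof.
  intros [z [Dz Hz]]. destruct (c_dense z (/ INR (S (length s)))) as [j Hj].
  { apply Rinv_0_lt_compat, lt_0_INR; lia. }
  exists j, z; split; [exact Dz|]. intros k Hk. rewrite length_app in Hk; simpl in Hk.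
  destruct (Nat.eq_dec k (length s)) as [->|Hne].
  - rewrite nth_middle; exact Hj.
  - rewrite app_nth1 by lia. apply Hz; lia.
Qed.

Lemma piece_branch_complete (x : nat -> nat) p :
  (forall n, closure2 (piece (map x (seq 0 n))) p) -> exists z, D p z.
Proof.
  intros Hx.
  assert (Hw : forall n, exists qz : Cantor2 * Z, cyl2 p n (fst qz) /\ D (fst qz) (snd qz) /\
            forall k, (k < n)%nat -> d (snd qz) (c (x k)) < / INR (S k)).
  { intros n. destruct (Hx n n) as (q & Hq & z & Dz & Hz). exists (q, z); simpl.
    split; [exact Hq | split; [exact Dz|]]. intros k Hk.
    rewrite <- (nth_map_seq x n k Hk). apply Hz. rewrite length_map, length_seq; exact Hk. }
  destruct (choice _ Hw) as [w Hw'].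
  destruct d_metric as (_ & _ & d_sym & d_tri).
  destruct (d_complete (fun n => snd (w n))) as [l Hl].
  { intros eps Heps. destruct (archimed_cor1 (eps / 2)) as [N [HN HN0]]; [lra|].
    exists N. intros m n Hm Hn.
    pose proof (proj2 (proj2 (Hw' m)) (pred N) ltac:(lia)) as H1.
    pose proof (proj2 (proj2 (Hw' n)) (pred N) ltac:(lia)) as H2.
    replace (S (pred N)) with N in H1, H2 by lia.
    pose proof (d_tri (snd (w m)) (c (x (pred N))) (snd (w n))) as H3.
    rewrite (d_sym (c (x (pred N)))) in H3. lra. }
  exists l. apply NNPP; intro Hnot. destruct (D_closed p l Hnot) as (n0 & eps & Heps & Hn0).
  destruct (Hl eps Heps) as [N HN].
  destruct (Hw' (Nat.max n0 N)) as (Hq & Dq & _).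
  apply (Hn0 (fst (w (Nat.max n0 N))) (snd (w (Nat.max n0 N)))); [| | exact Dq].
  - apply cyl2_le with (Nat.max n0 N); [lia | exact Hq].
  - rewrite d_sym. apply HN; lia.
Qed.

(* If p lies in no [B s], choosing at each node a successor at which p is still in the
   envelope yields a branch along which p is in the closure of every piece. *)
Lemma meager_nonmeager_at_piece_nil :
  meager (fun p => nonmeager_at (piece []) p /\ ~ exists z, D p z).
Proof.
  pose (B s p := nonmeager_at (piece s) p /\ forall j, ~ nonmeager_at (piece (s ++ [j])) p).
  assert (HB : forall s, meager (B s)).
  { intros s. apply (meager_of_nonmeager_at (piece s)).
    - apply baire_property_closed_diff; [|intros j]; apply closed2_nonmeager_at.
    - intros p [Hp _]; exact Hp.
    - eapply meager_sub.
      { apply (meager_union (fun j p => piece (s ++ [j]) p /\ ~ nonmeager_at (piece (s ++ [j])) p)).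
        intros j; apply meager_diff_nonmeager_at. }
      intros p [[_ Hj] Hp]. destruct (piece_snoc s p Hp) as [j Hsj]. exists j; split; auto. }
  eapply meager_sub; [apply (meager_union_list B HB)|].
  intros p [Hnil HnD]. apply NNPP; intro Hno_node.
  assert (Hg : forall s, exists j, nonmeager_at (piece s) p -> nonmeager_at (piece (s ++ [j])) p).
  { intros s. destruct (classic (nonmeager_at (piece s) p)) as [Hs|Hs]; [|exists 0%nat; tauto].
    apply NNPP; intro Hnone. apply Hno_node. exists s; split; [exact Hs|].
    intros j Hj. apply Hnone; exists j; intros _; exact Hj. }
  destruct (choice _ Hg) as [g Hg'].
  assert (Hbranch : forall n, nonmeager_at (piece (branch g n)) p)
    by (induction n; simpl; auto).
  apply HnD, (piece_branch_complete (fun k => g (branch g k))).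
  intros n. rewrite <- branch_map. apply nonmeager_at_closure2, Hbranch.
Qed.

End AnalyticEnvelope.

Lemma analytic2_meager_nonmeager_at_diff A :
  analytic2 A -> meager (fun p => nonmeager_at A p /\ ~ A p).
Proof.
  intros (Z & d & (Hd & Hcomp & [c Hc]) & D & HD & HAD).
  eapply meager_sub; [apply (meager_nonmeager_at_piece_nil Z d c D Hd Hcomp Hc HD)|].
  intros p [Hp Ap]. split.
  - revert Hp; apply nonmeager_at_ext. intros q; rewrite piece_nil, HAD; reflexivity.
  - rewrite <- HAD; exact Ap.
Qed.

Theorem analytic2_baire_property A : analytic2 A -> baire_property A.
Proof.
  intros HA. exists (interior2 (nonmeager_at A)). split; [apply open2_interior2|].
  eapply meager_sub.
  { apply meager_union2; [apply (meager_diff_nonmeager_at A) | apply meager_union2].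
    - apply analytic2_meager_nonmeager_at_diff, HA.
    - apply sparse_meager, (sparse_closed2_boundary (nonmeager_at A)), closed2_nonmeager_at. }
  intros p Hiff. pose proof (interior2_sub (nonmeager_at A) p). cbv beta in *.
  destruct (classic (A p)), (classic (nonmeager_at A p)),
    (classic (interior2 (nonmeager_at A) p)); tauto.
Qed.

Definition nonexpansive2 (g : Cantor2 -> Cantor2) : Prop :=
  forall n p q, cyl2 p n q -> cyl2 (g p) n (g q).

Lemma analytic2_comp g A : nonexpansive2 g -> analytic2 A -> analytic2 (fun p => A (g p)).
Proof.
  intros Hg (Z & d & Hd & D & HD & HAD). exists Z, d; split; [exact Hd|].
  exists (fun p z => D (g p) z); split.
  - intros p z Hpz. destruct (HD _ _ Hpz) as (n & eps & Heps & Hn).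
    exists n, eps; split; [exact Heps|]. intros q w Hq Hw. apply Hn; auto.
  - intros p; apply HAD.
Qed.

Lemma meager_comp_involution A psi :
  (forall q, psi (psi q) = q) -> nonexpansive2 psi -> meager A -> meager (fun q => A (psi q)).
Proof.
  intros Hinv Hpsi (N & HN & Hcov). exists (fun k q => N k (psi q)); split.
  - intros k p n. destruct (HN k (psi p) n) as (q & m & Hnm & Hq & Hr).
    exists (psi q), m; split; [exact Hnm | split].
    + rewrite <- (Hinv p). apply Hpsi, Hq.
    + intros r Hqr. apply Hr. rewrite <- (Hinv q). apply Hpsi, Hqr.
  - intros p Hp; apply Hcov, Hp.
Qed.

Definition small_involutions (psi : nat -> Cantor2 -> Cantor2) : Prop :=
  forall i, (forall q, psi i (psi i q) = q) /\ nonexpansive2 (psi i) /\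
            (forall q, cyl2 q i (psi i q)).

Theorem meager_of_disjoint_involutions A psi :
  baire_property A -> small_involutions psi -> (forall i q, A q -> ~ A (psi i q)) -> meager A.
Proof.
  intros HA Hpsi Hdisj. apply NNPP; intro HnA.
  destruct (baire_property_comeager_cyl2 A HA HnA) as (p & n & Hpn).
  destruct (Hpsi n) as (Hinv & Hne & Hsmall).
  apply (cyl2_not_meager p n).
  eapply meager_sub; [apply (meager_union2 _ _ Hpn (meager_comp_involution _ _ Hinv Hne Hpn))|].
  intros q Hq; cbv beta. destruct (classic (A q)) as [Aq|Aq]; [right | left; auto].
  split; [eapply cyl2_trans; eauto | apply Hdisj, Aq].
Qed.

Definition flip_at (i : nat) (a : Cantor) : Cantor :=
  fun j => if Nat.eq_dec j i then negb (a j) else a j.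

Lemma flip_at_involutive i a : flip_at i (flip_at i a) = a.
Proof.
  apply functional_extensionality; intros j; unfold flip_at.
  destruct (Nat.eq_dec j i); [apply Bool.negb_involutive | reflexivity].
Qed.

Lemma agree_flip_at n i a b : agree n a b -> agree n (flip_at i a) (flip_at i b).
Proof. intros H j Hj; unfold flip_at; rewrite H; auto. Qed.

Lemma agree_flip_at_self i a : agree i a (flip_at i a).
Proof. intros j Hj; unfold flip_at; destruct (Nat.eq_dec j i); [lia | reflexivity]. Qed.

Lemma differ_at_one_flip_at i a : differ_at_one a (flip_at i a).
Proof.
  exists i; unfold flip_at; split.
  - destruct (Nat.eq_dec i i) as [_|]; [destruct (a i); discriminate | congruence].
  - intros j Hj; destruct (Nat.eq_dec j i); congruence.
Qed.

Lemma small_involutions_flip_fst : small_involutions (fun i q => (flip_at i (fst q), snd q)).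
Proof.
  intros i; split; [|split].
  - intros [a b]; simpl; rewrite flip_at_involutive; reflexivity.
  - intros n p q [H1 H2]; split; [apply agree_flip_at, H1 | exact H2].
  - intros q; split; [apply agree_flip_at_self | apply agree_refl].
Qed.

Lemma small_involutions_flip_snd : small_involutions (fun i q => (fst q, flip_at i (snd q))).
Proof.
  intros i; split; [|split].
  - intros [a b]; simpl; rewrite flip_at_involutive; reflexivity.
  - intros n p q [H1 H2]; split; [exact H1 | apply agree_flip_at, H2].
  - intros q; split; [apply agree_refl | apply agree_flip_at_self].
Qed.

Theorem lemma3p3 (E : Cantor -> Cantor -> Prop) :
  equivalence_rel E ->
  analytic2 (graph2 E) ->
  (forall a b, differ_at_one a b -> ~ E a b) ->
  meager2 (graph2 E) /\ ~ countably_many_classes E.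
Proof.
  intros (_ & E_sym & E_trans) HE Hone.
  assert (Hflip : forall i a b, E a b -> ~ E (flip_at i a) b).
  { intros i a b Hab Hfb. apply (Hone a (flip_at i a) (differ_at_one_flip_at i a)). eauto. }
  split.
  - apply meager_meager2.
    apply (meager_of_disjoint_involutions _ _ (analytic2_baire_property _ HE)
             small_involutions_flip_snd).
    intros i [a b] Hab Hab'. exact (Hflip i b a (E_sym _ _ Hab) (E_sym _ _ Hab')).
  - intros [f Hf].
    assert (Hclass : forall k, analytic2 (fun q => E (fst q) (f k))).
    { intros k. apply (analytic2_comp (fun q => (fst q, f k)) (graph2 E)); [|exact HE].
      intros n p q [H1 _]; split; [exact H1 | apply agree_refl]. }
    apply (cyl2_not_meager (f 0%nat, f 0%nat) 0).
    eapply meager_sub.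
    { apply (meager_union (fun k q => E (fst q) (f k))); intros k.
      apply (meager_of_disjoint_involutions _ _ (analytic2_baire_property _ (Hclass k))
               small_involutions_flip_fst).
      intros i [a b] Hab; exact (Hflip i a (f k) Hab). }
    intros q _. destruct (Hf (fst q)) as [k Hk]; exists k; exact Hk.
Qed.
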